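(* Let $\omega\in(0,\pi/2]$ and let $S$ be a moving sofa with rotation angle $\omega$ in standard position. Then $\mathcal{M}(S)=P_\omega\cap\bigcap_{0\le t\le\omega}L_S(t)$ is a moving sofa with rotation angle $\omega$, in standard position, and $S\subseteq\mathcal{M}(S)$.
   Context: For $t\in\mathbb{R}$ put $u_t=(\cos t,\sin t)$, $v_t=(-\sin t,\cos t)$; $R_t$ is counterclockwise rotation about the origin by $t$. For a nonempty compact $S$, $p_S(t)=\max_{p\in S}p\cdot u_t$. The hallway is $L=L_H\cup L_V$ with $L_H=(-\infty,1]\times[0,1]$, $L_V=[0,1]\times(-\infty,1]$. A moving sofa is a connected, nonempty, compact $S\subset\mathbb{R}^2$ such that some translate of $S$ lies in $L_H$ and can be moved by a continuous rigid motion inside $L$ to a subset of $L_V$; its rotation angle $\omega\in(0,\pi/2]$ is the total clockwise angle rotated in this motion (regarded as fixed data of the sofa). It is in standard position if $p_S(\omega)=p_S(\pi/2)=1$. Let $H=\mathbb{R}\times[0,1]$, $V=[0,1]\times\mathbb{R}$, $P_\omega=H\cap R_\omega(V)$, and $L_S(t)=R_t(L)+(p_S(t)-1)u_t+(p_S(t+\pi/2)-1)v_t$. *)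

From HB Require Import structures.
From mathcomp Require Import all_boot all_order all_algebra.
From mathcomp Require Import all_classical all_reals all_analysis.
Set Implicit Arguments. Unset Strict Implicit. Unset Printing Implicit Defensive.
Import Order.TTheory GRing.Theory Num.Theory.
Import numFieldNormedType.Exports.
Local Open Scope classical_set_scope.
Local Open Scope ring_scope.

Section Sofa.
Variable R : realType.

Definition pt := (R * R)%type.
Definition dotp (p q : pt) : R := p.1 * q.1 + p.2 * q.2.
Definition addp (p q : pt) : pt := (p.1 + q.1, p.2 + q.2).
Definition scalep (a : R) (p : pt) : pt := (a * p.1, a * p.2).

Definition uvec (t : R) : pt := (cos t, sin t).
Definition vvec (t : R) : pt := (- sin t, cos t).

Definition rot (t : R) (p : pt) : pt :=
  (cos t * p.1 - sin t * p.2, sin t * p.1 + cos t * p.2).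

Definition rigid (t : R) (a : pt) (S : set pt) : set pt :=
  [set addp (rot t p) a | p in S].

(* p_S(t) = max_{p in S} p . u_t  (a sup, which is a max for compact nonempty S) *)
Definition supp (S : set pt) (t : R) : R := sup [set dotp p (uvec t) | p in S].

Definition LH : set pt := [set p | p.1 <= 1 /\ 0 <= p.2 <= 1].
Definition LV : set pt := [set p | 0 <= p.1 <= 1 /\ p.2 <= 1].
Definition hallway : set pt := LH `|` LV.

(* moving sofa with rotation angle omega: a continuous rigid motion
   tau in [0,1] |-> (R_{theta tau} . + a tau), starting from a translate of S
   in L_H (theta 0 = 0), staying inside L, ending in L_V, rotating clockwise
   by omega in total (theta 1 = - omega). *)
Definition is_moving_sofa (omega : R) (S : set pt) : Prop :=
  (0 < omega <= pi / 2) /\ connected S /\ S !=set0 /\ compact S /\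
  exists (theta : R -> R) (a : R -> pt),
    {within `[0, 1], continuous theta} /\ {within `[0, 1], continuous a} /\
    theta 0 = 0 /\ theta 1 = - omega /\
    (forall tau, 0 <= tau <= 1 -> rigid (theta tau) (a tau) S `<=` hallway) /\
    rigid (theta 0) (a 0) S `<=` LH /\
    rigid (theta 1) (a 1) S `<=` LV.

Definition standard_position (omega : R) (S : set pt) : Prop :=
  supp S omega = 1 /\ supp S (pi / 2) = 1.

Definition Hstrip : set pt := [set p | 0 <= p.2 <= 1].
Definition Vstrip : set pt := [set p | 0 <= p.1 <= 1].
Definition Pomega (omega : R) : set pt := Hstrip `&` rigid omega (0, 0) Vstrip.

Definition LS (S : set pt) (t : R) : set pt :=
  rigid t (addp (scalep (supp S t - 1) (uvec t))
                (scalep (supp S (t + pi / 2) - 1) (vvec t))) hallway.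

Definition sofaM (omega : R) (S : set pt) : set pt :=
  Pomega omega `&` [set p | forall t, 0 <= t <= omega -> LS S t p].

End Sofa.

(* In the frame rotated by t, a point p has coordinates <p, u_t> and
   <p, u_(t + pi/2)>; translating X so that it touches the outer walls x = 1
   and y = 1 of the hallway shifts them by 1 - p_X(t) and 1 - p_X(t + pi/2),
   and L_S(t) is the set of points whose shifted coordinates lie in L.

   S lies in every L_S(t), 0 <= t <= omega: the motion of S passes through the
   angle -t (intermediate value theorem), and a copy of S inside L stays inside
   L when pushed up and right until it touches the outer walls.  Rotating by
   -omega tau and translating by (1 - p_S(omega tau), 1 - p_S(omega tau + pi/2))
   then moves M(S) through L, continuously because the support function of a
   compact set is continuous.  M(S) is closed and lies in a bounded box, and
   standard position passes from S to M(S) because S <= M(S) <= P_omega.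

   Every p in M(S) is joined inside M(S) to a point of S by a segment whose
   direction lies in the cone spanned by (0, 1) and u_omega: along such a
   segment all the coordinates above, 0 <= t <= omega, increase.  The endpoint
   in S lies vertically above or below p or, when there is none, S lies to the
   right of p by connectedness and the endpoint maximizes <., u_(omega + pi/2)>
   over S. *)

From HB Require Import structures.
From mathcomp Require Import all_boot all_order all_algebra.
From mathcomp Require Import all_classical all_reals all_analysis.
From mathcomp Require Import ring lra.
Import Order.TTheory GRing.Theory Num.Theory.
Import numFieldNormedType.Exports.
Local Open Scope classical_set_scope.
Local Open Scope ring_scope.
Set Implicit Arguments. Unset Printing Implicit Defensive.

Section Trigonometry.
Context {R : realType}.
Implicit Type w : R.

Lemma sin_gt0_pihalf w : 0 < w <= pi / 2 -> 0 < sin w.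
Proof.
by move=> /andP[? ?]; have := pi_gt0 R => ?; apply: sin_gt0_pi; apply/andP; split; lra.
Qed.

Lemma cos_ge0_0pihalf w : 0 <= w <= pi / 2 -> 0 <= cos w.
Proof.
by move=> /andP[? ?]; have := pi_gt0 R => ?; apply: cos_ge0_pihalf; apply/andP; split; lra.
Qed.

End Trigonometry.

Section Placement.
Context {R : realType}.
Implicit Types (t : R) (p q z : pt R) (X : set (pt R)).

Lemma addpE p q : addp p q = p + q.
Proof. by []. Qed.

Lemma dotp_uvecDpihalf p t :
  dotp p (uvec (t + pi / 2)) = - p.1 * sin t + p.2 * cos t.
Proof. by rewrite /dotp /= cosDpihalf sinDpihalf mulrN mulNr. Qed.

Lemma dotp_uvec0 p : dotp p (uvec 0) = p.1.
Proof. by rewrite /dotp /= cos0 sin0 mulr1 mulr0 addr0. Qed.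

Lemma dotp_uvec_pihalf p : dotp p (uvec (pi / 2)) = p.2.
Proof. by rewrite /dotp /= cos_pihalf sin_pihalf mulr0 mulr1 add0r. Qed.

Lemma continuous_dotp (u : pt R) : continuous (fun p : pt R => dotp p u).
Proof. by move=> p; apply: cvgD; apply: cvgMl; [exact: cvg_fst | exact: cvg_snd]. Qed.

Lemma rotK t : cancel (@rot R t) (rot (- t)).
Proof.
have e (x : R) : x * cos t ^+ 2 + x * sin t ^+ 2 = x by rewrite -mulrDr cos2Dsin2 mulr1.
move=> [x y]; rewrite /rot cosN sinN /=; congr pair.
  by rewrite -[RHS]e; ring.
by rewrite -[RHS]e; ring.
Qed.

Lemma rotNK t : cancel (@rot R (- t)) (rot t).
Proof. by move=> p; have := rotK (- t) p; rewrite opprK. Qed.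

Lemma rotD t p q : rot t (p + q) = rot t p + rot t q.
Proof. by case: p q => [x y] [x2 y2]; rewrite /rot; congr pair; cbn; ring. Qed.

Lemma rotNE t p : rot (- t) p = (dotp p (uvec t), dotp p (uvec (t + pi / 2))).
Proof. by rewrite dotp_uvecDpihalf /rot cosN sinN /dotp /=; congr pair; ring. Qed.

Lemma rigidP t a X z : rigid t a X z <-> X (rot (- t) (z - a)).
Proof.
split; first by case=> p Xp <-; rewrite addpE addrK rotK.
by move=> Xz; exists (rot (- t) (z - a)) => //; rewrite addpE rotNK subrK.
Qed.

(* Position of [p] once [X] is rotated by [-t] and translated so that it
   touches the outer walls [x = 1] and [y = 1] of the hallway. *)
Definition placed X t p : pt R :=
  addp (rot (- t) p) (1 - supp X t, 1 - supp X (t + pi / 2)).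

Lemma placedE X t p : placed X t p =
  (dotp p (uvec t) + 1 - supp X t, dotp p (uvec (t + pi / 2)) + 1 - supp X (t + pi / 2)).
Proof. by rewrite /placed rotNE /addp /= !addrA. Qed.

Lemma LS_placedP X t z : LS X t z <-> hallway (placed X t z).
Proof.
rewrite /LS; have -> : addp (scalep (supp X t - 1) (uvec t))
    (scalep (supp X (t + pi / 2) - 1) (vvec t))
    = - rot t (1 - supp X t, 1 - supp X (t + pi / 2)).
  by rewrite /rot; congr pair; cbn; ring.
by rewrite rigidP opprK rotD rotK.
Qed.

Lemma PomegaP w z : Pomega w z <-> 0 <= z.2 <= 1 /\ 0 <= dotp z (uvec w) <= 1.
Proof. by rewrite /Pomega /setI /= rigidP subr0 rotNE. Qed.

End Placement.

Section Walls.
Context {R : realType}.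
Implicit Types (Z : set (pt R)).

Definition below_walls : set (pt R) := [set z | z.1 <= 1 /\ z.2 <= 1].

Definition upper_closed Z := forall z z', Z z -> below_walls z' ->
  z.1 <= z'.1 -> z.2 <= z'.2 -> Z z'.

Lemma LH_below_walls : @LH R `<=` below_walls.
Proof. by move=> z [? /andP[_ ?]]. Qed.

Lemma LV_below_walls : @LV R `<=` below_walls.
Proof. by move=> z [/andP[_ ?] ?]. Qed.

Lemma hallway_below_walls : @hallway R `<=` below_walls.
Proof. by move=> z [/LH_below_walls | /LV_below_walls]. Qed.

Lemma LH_upper_closed : upper_closed (@LH R).
Proof. move=> z z' [_ /andP[? _]] [? ?] ? ?; split=> //; apply/andP; split; lra. Qed.

Lemma LV_upper_closed : upper_closed (@LV R).
Proof. move=> z z' [/andP[? _] _] [? ?] ? ?; split=> //; apply/andP; split; lra. Qed.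

Lemma hallway_upper_closed : upper_closed (@hallway R).
Proof.
move=> z z' [Hz | Vz] bz' le1 le2.
  by left; exact: LH_upper_closed Hz bz' le1 le2.
by right; exact: LV_upper_closed Vz bz' le1 le2.
Qed.

End Walls.

Section SupportFunction.
Context {R : realType}.
Variable X : set (pt R).
Hypotheses (X0 : X !=set0) (Xc : compact X).
Implicit Types (t c : R) (p : pt R).

Lemma supp_le t c : (forall p, X p -> dotp p (uvec t) <= c) -> supp X t <= c.
Proof.
move=> Xc_le; have [p Xp] := X0; apply: ge_sup; first by exists (dotp p (uvec t)), p.
by move=> _ [q Xq <-]; exact: Xc_le.
Qed.

Lemma has_ubound_dotp t : has_ubound [set dotp p (uvec t) | p in X].
Proof.
have [s _ smax] := compact_EVT_max X0 Xc (continuous_subspaceT (continuous_dotp (uvec t))).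
by exists (dotp s (uvec t)) => _ [p Xp <-]; apply: smax; rewrite inE.
Qed.

Lemma dotp_le_supp t p : X p -> dotp p (uvec t) <= supp X t.
Proof. by move=> Xp; apply: (ub_le_sup (has_ubound_dotp t)); exists p. Qed.

Lemma supp_attained t : exists2 s, X s & dotp s (uvec t) = supp X t.
Proof.
have [s /set_mem Xs smax] :=
  compact_EVT_max X0 Xc (continuous_subspaceT (continuous_dotp (uvec t))).
exists s => //; apply/le_anti; rewrite dotp_le_supp //=.
by apply: supp_le => p Xp; apply: smax; rewrite inE.
Qed.

Lemma supp_le_supp_dist (B t1 t2 : R) : (forall p, X p -> `|p.1| <= B /\ `|p.2| <= B) ->
  supp X t1 <= supp X t2 + B * (`|cos t1 - cos t2| + `|sin t1 - sin t2|).
Proof.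
move=> XB; apply: supp_le => p Xp; have [p1B p2B] := XB p Xp.
have bound_term (x d : R) : `|x| <= B -> x * d <= B * `|d|.
  by move=> xB; apply: le_trans (ler_norm _) _; rewrite normrM ler_wpM2r.
have := dotp_le_supp t2 Xp; have := bound_term _ (cos t1 - cos t2) p1B.
have := bound_term _ (sin t1 - sin t2) p2B; rewrite /dotp /=; lra.
Qed.

Lemma continuous_supp : continuous (supp X).
Proof.
move=> t0; have [M [_ MX]] := compact_bounded Xc.
have XB p : X p -> `|p.1| <= M + 1 /\ `|p.2| <= M + 1.
  by move=> Xp; move: (MX (M + 1) (ltr_pwDr ltr01 (lexx M)) p Xp);
    rewrite /= prod_normE ge_max => /andP.
pose d t := (M + 1) * (`|cos t - cos t0| + `|sin t - sin t0|).
have d0 : d t @[t --> t0] --> 0.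
  have -> : 0 = d t0 by rewrite /d !subrr normr0 addr0 mulr0.
  apply: cvgMr; apply: cvgD; apply: cvg_norm; apply: cvgB;
    by [exact: continuous_cos | exact: continuous_sin | exact: cvg_cst].
apply: (@squeeze_cvgr _ _ _ _ (fun t => supp X t0 - d t) (fun t => supp X t0 + d t)).
- apply: nearW => t; have := supp_le_supp_dist _ t0 t XB; have := supp_le_supp_dist _ t t0 XB.
  by rewrite /d (distrC (cos t0)) (distrC (sin t0)) => ? ?; apply/andP; split; lra.
- by rewrite -[X in _ --> X]subr0; apply: cvgB => //; exact: cvg_cst.
- by rewrite -[X in _ --> X]addr0; apply: cvgD => //; exact: cvg_cst.
Qed.

End SupportFunction.

Section Touching.
Context {R : realType}.
Implicit Types (t : R) (p : pt R) (X Y Z : set (pt R)).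

Lemma supp_subset X Y t : X !=set0 -> compact Y -> X `<=` Y -> supp X t <= supp Y t.
Proof.
move=> X0 Yc XY; have Y0 : Y !=set0 by case: X0 => p /XY; exists p.
by apply: supp_le => // p /XY; exact: dotp_le_supp.
Qed.

Lemma placed_le_supp X t p : hallway (placed X t p) ->
  dotp p (uvec t) <= supp X t /\ dotp p (uvec (t + pi / 2)) <= supp X (t + pi / 2).
Proof. by move/hallway_below_walls; rewrite placedE => -[/= ? ?]; split; lra. Qed.

Lemma rigid_sub_placed X Z t b : X !=set0 -> compact X ->
    Z `<=` below_walls -> upper_closed Z -> rigid (- t) b X `<=` Z ->
  forall p, X p -> Z (placed X t p).
Proof.
move=> X0 Xc Zbelow Zup XZ.
have moved_le q : X q -> dotp q (uvec t) + b.1 <= 1 /\ dotp q (uvec (t + pi / 2)) + b.2 <= 1.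
  by move=> Xq; have /Zbelow := XZ _ (imageP _ Xq); rewrite rotNE.
have f_le : supp X t <= 1 - b.1 by apply: supp_le => // q /moved_le[? _]; lra.
have g_le : supp X (t + pi / 2) <= 1 - b.2 by apply: supp_le => // q /moved_le[_ ?]; lra.
move=> p Xp; have := dotp_le_supp X0 Xc t p Xp.
have := dotp_le_supp X0 Xc (t + pi / 2) p Xp.
move=> ? ?; apply: (Zup _ _ (XZ _ (imageP _ Xp))); rewrite placedE ?rotNE /=;
  by [rewrite /below_walls /=; split; lra | lra].
Qed.

Lemma moving_sofa_sub_LS w X t : is_moving_sofa w X -> 0 <= t <= w -> X `<=` LS X t.
Proof.
case=> _ [_ [X0 [Xc [th [a [cth [_ [th0 [th1 [inL _]]]]]]]]]] /andP[t0 tw] p Xp.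
have [tau tau01 th_tau] : exists2 tau, tau \in `[0, 1] & th tau = - t.
  apply: IVT => //; rewrite th0 th1 ge_min le_max.
  by apply/andP; split; apply/orP; [right | left]; lra.
apply/LS_placedP; apply: (rigid_sub_placed t X0 Xc (@hallway_below_walls R)
  (@hallway_upper_closed R) _ p Xp).
by rewrite -th_tau; apply: inL; rewrite in_itv in tau01.
Qed.

Lemma moving_sofa_sub_Pomega w X : is_moving_sofa w X -> standard_position w X ->
  X `<=` Pomega w.
Proof.
case=> _ [_ [X0 [Xc [th [a [_ [_ [th0 [th1 [_ [inLH inLV]]]]]]]]]]] [fw gpi] p Xp.
have inLH' : rigid (- 0) (a 0) X `<=` @LH R by rewrite oppr0 -{1}th0.
have inLV' : rigid (- w) (a 1) X `<=` @LV R by rewrite -th1.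
have := rigid_sub_placed 0 X0 Xc (@LH_below_walls R) (@LH_upper_closed R) inLH' p Xp.
have := rigid_sub_placed w X0 Xc (@LV_below_walls R) (@LV_upper_closed R) inLV' p Xp.
rewrite !placedE add0r gpi fw dotp_uvec_pihalf => -[/= ? _] [_ /= ?].
by apply/PomegaP; split; apply/andP; split; lra.
Qed.

End Touching.

Section ClosedSets.
Context {T : topologicalType} {R : realType}.
Implicit Types (f : T -> R) (c : R).

Lemma closed_le_continuous f c : continuous f -> closed [set x | f x <= c].
Proof. by move=> cf; have := (continuous_closedP f).1 cf _ (@closed_le R c). Qed.

Lemma closed_ge_continuous f c : continuous f -> closed [set x | c <= f x].
Proof. by move=> cf; have := (continuous_closedP f).1 cf _ (@closed_ge R c). Qed.

End ClosedSets.

Section SofaMTopology.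
Context {R : realType}.
Implicit Types (w t : R) (p : pt R) (X : set (pt R)).

Lemma sofaMP w X p :
  sofaM w X p <-> Pomega w p /\ forall t, 0 <= t <= w -> hallway (placed X t p).
Proof.
by split=> -[Pp Lp]; split=> // t /Lp /LS_placedP.
Qed.

Lemma continuous_placed X t : continuous (placed X t).
Proof.
have -> : placed X t = fun p => (dotp p (uvec t) + 1 - supp X t,
    dotp p (uvec (t + pi / 2)) + 1 - supp X (t + pi / 2)).
  by apply/funext => p; rewrite placedE.
move=> p; have affine u c : (fun q => dotp q u + 1 - c) @ p --> dotp p u + 1 - c.
  by apply: cvgB; [apply: cvgD; [exact: continuous_dotp | exact: cvg_cst] | exact: cvg_cst].
exact: cvg_pair (affine _ _) (affine _ _).
Qed.

Let continuous_fst : continuous (fun z : pt R => z.1).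
Proof. by move=> z; exact: cvg_fst. Qed.

Let continuous_snd : continuous (fun z : pt R => z.2).
Proof. by move=> z; exact: cvg_snd. Qed.

Lemma closed_hallway : closed (@hallway R).
Proof.
have -> : @hallway R =
    [set z : pt R | z.1 <= 1] `&` [set z | 0 <= z.2] `&` [set z | z.2 <= 1] `|`
    [set z : pt R | 0 <= z.1] `&` [set z | z.1 <= 1] `&` [set z | z.2 <= 1].
  apply/seteqP; split=> z.
    by case=> [[? /andP[? ?]] | [/andP[? ?] ?]]; [left | right].
  by case=> -[[? ?] ?]; [left | right]; split=> //=; apply/andP.
apply: closedU; apply: closedI; try apply: closedI;
  by [apply: closed_le_continuous | apply: closed_ge_continuous].
Qed.

Lemma closed_Pomega w : closed (Pomega w).
Proof.
have -> : Pomega w =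
    [set z | 0 <= z.2] `&` [set z | z.2 <= 1] `&`
    [set z | 0 <= dotp z (uvec w)] `&` [set z | dotp z (uvec w) <= 1].
  apply/seteqP; split=> z.
    by move/PomegaP=> [/andP[? ?] /andP[? ?]].
  by move=> [[[? ?] ?] ?]; apply/PomegaP; split; apply/andP.
have cw := continuous_dotp (uvec w).
by apply: closedI; [apply: closedI; [apply: closedI|] |];
  [apply: closed_ge_continuous | apply: closed_le_continuous
  | apply: closed_ge_continuous | apply: closed_le_continuous].
Qed.

Lemma closed_sofaM w X : closed (sofaM w X).
Proof.
apply: closedI; first exact: closed_Pomega.
have -> : [set p | forall t, 0 <= t <= w -> LS X t p] =
    \bigcap_(t in [set t | 0 <= t <= w]) (placed X t @^-1` @hallway R).
  by apply/seteqP; split=> p Lp t /Lp /LS_placedP.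
apply: closed_bigI => t _ /=.
by apply: (continuous_closedP _).1 _ _ closed_hallway; exact: continuous_placed.
Qed.

Lemma compact_sofaM w X : 0 < w <= pi / 2 -> compact (sofaM w X).
Proof.
move=> w_itv; have [w0 wpi] := andP w_itv.
suff M_box : sofaM w X `<=` `[- supp X (w + pi / 2) / sin w, supp X 0] `*` `[0, 1].
  apply: (subclosed_compact _ _ M_box); first exact: closed_sofaM.
  by apply: compact_setX; exact: segment_compact.
move=> p /sofaMP[/PomegaP[p2 _] Lp].
have [+ _] := placed_le_supp (Lp 0 ltac:(by rewrite lexx ltW)); rewrite dotp_uvec0 => p1.
have [_ +] := placed_le_supp (Lp w ltac:(by rewrite lexx ltW)); rewrite dotp_uvecDpihalf => pv.
split; rewrite /= in_itv //= p1 andbT ler_pdivrMr ?sin_gt0_pihalf //.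
have := sin_gt0_pihalf _ w_itv; have : 0 <= cos w by apply: cos_ge0_0pihalf; rewrite ltW.
by case/andP: p2; nra.
Qed.

End SofaMTopology.

Lemma connected_joined_to (T : topologicalType) (A B : set T) :
  connected A -> A !=set0 -> A `<=` B ->
  (forall b, B b -> exists C, [/\ connected C, C `<=` B, C b & C `&` A !=set0]) ->
  connected B.
Proof.
move=> Aconn [a Aa] AB joined.
pose I := [set C | [/\ connected C, C `<=` B & C `&` A !=set0]].
have -> : B = \bigcup_(C in I) (A `|` C).
  apply/seteqP; split=> [b /joined [C [Cconn CB Cb CA]] | b [C [_ CB _] [/AB | /CB]]] //.
  by exists C => //; right.
apply: bigcup_connected; first by exists a => C _; left.
by move=> C [Cconn _ CA]; apply: connectedU => //; rewrite setIC.
Qed.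

Section Segments.
Context {R : realType}.
Implicit Types (w t l : R) (e : pt R) (X : set (pt R)).

Definition line_segment e0 e1 : set (pt R) := [set e0 + l *: (e1 - e0) | l in `[0, 1]].

Lemma line_segment_connected e0 e1 : connected (line_segment e0 e1).
Proof.
apply: connected_continuous_connected; first exact: segment_connected.
apply: continuous_subspaceT => l.
by apply: cvgD; [exact: cvg_cst | apply: cvgZl; exact: cvg_id].
Qed.

Lemma line_segment_start e0 e1 : line_segment e0 e1 e0.
Proof. by exists 0; [rewrite /= in_itv /= lexx ler01 | rewrite scale0r addr0]. Qed.

Lemma line_segment_end e0 e1 : line_segment e0 e1 e1.
Proof. by exists 1; [rewrite /= in_itv /= lexx ler01 | rewrite scale1r addrC subrK]. Qed.

Definition coord_le w e0 e1 := forall t, 0 <= t <= w ->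
  dotp e0 (uvec t) <= dotp e1 (uvec t) /\
  dotp e0 (uvec (t + pi / 2)) <= dotp e1 (uvec (t + pi / 2)).

Lemma cone_coord_le w e0 e1 (A B : R) : 0 < w <= pi / 2 -> 0 <= A -> 0 <= B ->
  e1.1 - e0.1 = B * cos w -> e1.2 - e0.2 = A + B * sin w -> coord_le w e0 e1.
Proof.
move=> /andP[w0 wpi] A0 B0 d1 d2 t /andP[t0 tw]; have := pi_gt0 R => pi0.
have st : 0 <= sin t by apply: sin_ge0_pi; apply/andP; split; lra.
have ct : 0 <= cos t by apply: cos_ge0_0pihalf; apply/andP; split; lra.
have sw : 0 <= sin w by apply: sin_ge0_pi; apply/andP; split; lra.
have cw : 0 <= cos w by apply: cos_ge0_0pihalf; apply/andP; split; lra.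
have swt : 0 <= sin (w - t) by apply: sin_ge0_pi; apply/andP; split; lra.
have du : dotp e1 (uvec t) - dotp e0 (uvec t) =
    A * sin t + B * (cos w * cos t) + B * (sin w * sin t).
  by rewrite /dotp /= -[e1.1](subrK e0.1) -[e1.2](subrK e0.2) d1 d2; ring.
have dv : dotp e1 (uvec (t + pi / 2)) - dotp e0 (uvec (t + pi / 2)) =
    A * cos t + B * sin (w - t).
  rewrite !dotp_uvecDpihalf sinB -[e1.1](subrK e0.1) -[e1.2](subrK e0.2) d1 d2; ring.
split; rewrite -subr_ge0 ?du ?dv; by do ?[apply: addr_ge0 | apply: mulr_ge0].
Qed.

Lemma line_segment_sub_sofaM w X e0 e1 : sofaM w X e0 -> sofaM w X e1 ->
  coord_le w e0 e1 -> line_segment e0 e1 `<=` sofaM w X.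
Proof.
move=> /sofaMP[/PomegaP[a2 au] L0] /sofaMP[/PomegaP[b2 bu] L1] le01 p [l].
rewrite /= in_itv /= => /andP[l0 l1] <-.
have lin u : dotp (e0 + l *: (e1 - e0)) u = dotp e0 u + l * (dotp e1 u - dotp e0 u).
  by rewrite /dotp; cbn; ring.
have conv (x y : R) : 0 <= x <= 1 -> 0 <= y <= 1 -> 0 <= x + l * (y - x) <= 1.
  by move=> /andP[? ?] /andP[? ?]; apply/andP; split; nra.
have between (x y : R) : x <= y -> x <= x + l * (y - x) /\ x + l * (y - x) <= y.
  by move=> ?; split; nra.
apply/sofaMP; split.
  by apply/PomegaP; rewrite lin; split; [cbn; exact: conv | exact: conv].
move=> t tw; have [u_le v_le] := le01 t tw.
have [e1u e1v] := placed_le_supp (L1 t tw).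
apply: hallway_upper_closed (L0 t tw) _ _ _; rewrite !placedE !lin /=.
- have [_ ?] := between _ _ u_le; have [_ ?] := between _ _ v_le.
  by rewrite /below_walls /=; split; lra.
- by have [? _] := between _ _ u_le; lra.
- by have [? _] := between _ _ v_le; lra.
Qed.

End Segments.

Lemma connected_fst_gt {R : realType} (S : set (pt R)) (x : R) (s0 : pt R) :
  connected S -> S s0 -> x <= s0.1 -> ~ (exists2 s, S s & s.1 = x) ->
  forall s, S s -> x < s.1.
Proof.
move=> Sconn Ss0 xs0 no_s s Ss; rewrite ltNge; apply/negP => sx; apply: no_s.
have fst_itv : is_interval [set q.1 | q in S].
  apply/connected_intervalP; apply: connected_continuous_connected Sconn _.
  by apply: continuous_subspaceT => q; exact: cvg_fst.
have [q Sq qx] : [set q.1 | q in S] x.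
  by apply: (fst_itv s.1 s0.1); [exists s | exists s0 | apply/andP].
by exists q.
Qed.

Section Sofa.
Context {R : realType}.
Variables (w : R) (S : set (pt R)).
Hypotheses (w_itv : 0 < w <= pi / 2) (Sconn : connected S) (S0 : S !=set0) (Sc : compact S).
Local Notation M := (sofaM w S).

Lemma sofaM_comparable_to_sofa p : M p -> exists2 s, S s & coord_le w p s \/ coord_le w s p.
Proof.
move=> /sofaMP[_ Lp]; have [w0 wpi] := andP w_itv.
case: (pselect (exists2 s, S s & s.1 = p.1)) => [[s Ss sp] | no_s].
  exists s => //; have [ps | /ltW sp2] := leP p.2 s.2; [left | right].
    by apply: (cone_coord_le _ _ _ (s.2 - p.2) 0); rewrite ?subr_ge0 ?sp ?subrr ?mul0r ?addr0.
  by apply: (cone_coord_le _ _ _ (p.2 - s.2) 0); rewrite ?subr_ge0 ?sp ?subrr ?mul0r ?addr0.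
have [s0 Ss0 s0max] := supp_attained S0 Sc 0.
have [s1 Ss1 s1max] := supp_attained S0 Sc (w + pi / 2).
have [+ _] := placed_le_supp (Lp 0 ltac:(by rewrite lexx ltW)).
rewrite -s0max !dotp_uvec0 => ps0.
have [_ +] := placed_le_supp (Lp w ltac:(by rewrite lexx ltW)).
rewrite -s1max !dotp_uvecDpihalf => ps1.
have ps1x := @connected_fst_gt _ S p.1 s0 Sconn Ss0 ps0 no_s s1 Ss1.
have sw := sin_gt0_pihalf _ w_itv.
have cw : 0 < cos w.
  have cw0 : 0 <= cos w by apply: cos_ge0_0pihalf; rewrite ltW.
  rewrite lt_neqAle cw0 andbT eq_sym; apply/eqP => cw_eq.
  by move: ps1; rewrite cw_eq; nra.
exists s1 => //; left.
apply: (cone_coord_le _ _ _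
  ((dotp s1 (uvec (w + pi / 2)) - dotp p (uvec (w + pi / 2))) / cos w)
  ((s1.1 - p.1) / cos w)) => //.
- by apply: divr_ge0; rewrite ?subr_ge0 ?dotp_uvecDpihalf // ltW.
- by apply: divr_ge0; rewrite ?subr_ge0 // ltW.
- by field; rewrite gt_eqF.
- by rewrite !dotp_uvecDpihalf; field; rewrite gt_eqF.
Qed.

Hypothesis S_sub_M : S `<=` M.

Lemma sofaM_connected : connected M.
Proof.
apply: connected_joined_to Sconn S0 S_sub_M _ => p Mp.
have [s Ss [le_ps | le_sp]] := sofaM_comparable_to_sofa Mp.
  exists (line_segment p s); split; first exact: line_segment_connected.
  - exact: line_segment_sub_sofaM Mp (S_sub_M Ss) le_ps.
  - exact: line_segment_start.
  - by exists s; split=> //; exact: line_segment_end.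
exists (line_segment s p); split; first exact: line_segment_connected.
- exact: line_segment_sub_sofaM (S_sub_M Ss) Mp le_sp.
- exact: line_segment_end.
- by exists s; split=> //; exact: line_segment_start.
Qed.

Hypothesis S_std : standard_position w S.

Lemma sofaM_standard : standard_position w M.
Proof.
have M0 : M !=set0 by case: S0 => s /S_sub_M; exists s.
have Mc := @compact_sofaM _ w S w_itv.
have [Sw Spi] := S_std.
split; apply/le_anti/andP; split.
- by apply: (supp_le M0) => p /sofaMP[/PomegaP[_ /andP[_ ?]] _].
- by rewrite -{1}Sw; apply: supp_subset.
- by apply: (supp_le M0) => p /sofaMP[/PomegaP[/andP[_ ?] _] _]; rewrite dotp_uvec_pihalf.
- by rewrite -{1}Spi; apply: supp_subset.
Qed.

Lemma sofaM_moves : exists (theta : R -> R) (a : R -> pt R),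
  {within `[0, 1], continuous theta} /\ {within `[0, 1], continuous a} /\
  theta 0 = 0 /\ theta 1 = - w /\
  (forall tau, 0 <= tau <= 1 -> rigid (theta tau) (a tau) M `<=` @hallway R) /\
  rigid (theta 0) (a 0) M `<=` @LH R /\ rigid (theta 1) (a 1) M `<=` @LV R.
Proof.
have [w0 _] := andP w_itv; have [Sw Spi] := S_std.
exists (fun tau => - (w * tau)),
  (fun tau => (1 - supp S (w * tau), 1 - supp S (w * tau + pi / 2))).
have cw : continuous (fun tau : R => w * tau) by move=> x; apply: cvgMr; exact: cvg_id.
have csupp (f : R -> R) : continuous f -> continuous (fun tau => 1 - supp S (f tau)).
  move=> cf x; apply: cvgB; first exact: cvg_cst.
  exact: continuous_comp (cf x) (continuous_supp S0 Sc _).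
split; first by apply: continuous_subspaceT => x; apply: cvgN; exact: cw.
split.
  have cwpi : continuous (fun tau : R => w * tau + pi / 2).
    by move=> x; apply: cvgD; [exact: cw | exact: cvg_cst].
  by apply: continuous_subspaceT => x; exact: cvg_pair (csupp _ cw x) (csupp _ cwpi x).
split; first by rewrite mulr0 oppr0.
split; first by rewrite mulr1.
split.
  move=> tau /andP[tau0 tau1] _ [p /sofaMP[_ Lp] <-].
  by apply: (Lp (w * tau)); apply/andP; split; nra.
split.
  move=> _ [p /sofaMP[/PomegaP[/andP[p20 p21] _] Lp] <-]; rewrite mulr0.
  change (LH (placed S 0 p)).
  have [+ _] := placed_le_supp (Lp 0 ltac:(by rewrite lexx ltW)).
  rewrite placedE add0r Spi dotp_uvec_pihalf => ?.
  by split=> /=; [lra | apply/andP; split; lra].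
move=> _ [p /sofaMP[/PomegaP[_ /andP[pu0 pu1]] Lp] <-]; rewrite mulr1.
change (LV (placed S w p)).
have [_ +] := placed_le_supp (Lp w ltac:(by rewrite lexx ltW)).
rewrite placedE Sw => ?.
by split=> /=; [apply/andP; split; lra | lra].
Qed.

End Sofa.

Lemma moving_sofa_sub_sofaM {R : realType} (w : R) (X : set (pt R)) :
  is_moving_sofa w X -> standard_position w X -> X `<=` sofaM w X.
Proof.
move=> sofaX stdX p Xp; split; first exact: moving_sofa_sub_Pomega sofaX stdX p Xp.
by move=> t tw; exact: moving_sofa_sub_LS sofaX tw p Xp.
Qed.

Theorem theorem3p8 (R : realType) (omega : R) (S : set (pt R)) :
  0 < omega <= pi / 2 ->
  is_moving_sofa omega S -> standard_position omega S ->
  is_moving_sofa omega (sofaM omega S) /\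
  standard_position omega (sofaM omega S) /\
  S `<=` sofaM omega S.
Proof.
move=> _ sofaS stdS; have S_sub_M := moving_sofa_sub_sofaM sofaS stdS.
have [w_itv [Sconn [S0 [Sc _]]]] := sofaS.
split; last by split; [exact: sofaM_standard | exact: S_sub_M].
split=> //; split; first exact: sofaM_connected.
split; first by case: S0 => s /S_sub_M; exists s.
by split; [exact: compact_sofaM | exact: sofaM_moves].
Qed.
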